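(* Let $m\ge1$. Every constrained Young tableau of size $2\times m$ is realizable: for every such tableau $T$ there exist $\mathbf{a}=(a_1,a_2)$ and $\mathbf{b}=(b_1,\dots,b_m)$ with $0=a_1\le a_2$ and $0=b_1\le b_2\le\dots\le b_m$ such that for all cells $(i,j),(i',j')\in[2]\times[m]$ one has $T(i,j)<T(i',j')\iff a_i+b_j<a_{i'}+b_{j'}$ and $T(i,j)=T(i',j')\iff a_i+b_j=a_{i'}+b_{j'}$.
   Context: A constrained Young tableau of size $p\times m$ is a map $T:[p]\times[m]\to\{1,\dots,K\}$ onto $\{1,\dots,K\}$ (for some $K$) that is weakly increasing along each row and each column, and satisfies: (i) if $T(i,j)=T(i,j+1)$ for some $i\in[p]$, then $T(i',j)=T(i',j+1)$ for all $i'\in[p]$; (ii) if $T(i,j)=T(i+1,j)$ for some $j\in[m]$, then $T(i,j')=T(i+1,j')$ for all $j'\in[m]$. It is realizable if it is the tableau of relative orders of the values $a_i+b_j$ for some vectors $\mathbf{a},\mathbf{b}$ with weakly increasing entries, as in the claim. (These values are the values of the linear functional $(\mathbf{a},\mathbf{b})$ on the vertices $(\mathbf{e}_i,\mathbf{e}_j)$ of $\Delta_{p-1}\times\Delta_{m-1}$.) *)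

(* Indices of [p] x [m] are 0-based ordinals 'I_p, 'I_m. *)
From mathcomp Require Import all_boot all_order all_algebra.
From mathcomp Require Import reals.
Set Implicit Arguments. Unset Strict Implicit. Unset Printing Implicit Defensive.
Import Order.TTheory GRing.Theory Num.Theory.

Definition onto_initial (p m : nat) (T : 'I_p -> 'I_m -> nat) : Prop :=
  exists K : nat, forall k : nat,
    (1 <= k <= K)%N <-> exists (i : 'I_p) (j : 'I_m), T i j = k.

Definition constrained_young_tableau (p m : nat) (T : 'I_p -> 'I_m -> nat) : Prop :=
  [/\ onto_initial T,
      (forall (i : 'I_p) (j j' : 'I_m), (j <= j')%N -> (T i j <= T i j')%N),
      (forall (i i' : 'I_p) (j : 'I_m), (i <= i')%N -> (T i j <= T i' j)%N),
      (* (i) equal horizontal neighbours force the whole column pair equal *)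
      (forall (i : 'I_p) (j j1 : 'I_m), val j1 = (val j).+1 -> T i j = T i j1 ->
         forall i' : 'I_p, T i' j = T i' j1) &
      (* (ii) equal vertical neighbours force the whole row pair equal *)
      (forall (i i1 : 'I_p) (j : 'I_m), val i1 = (val i).+1 -> T i j = T i1 j ->
         forall j' : 'I_m, T i j' = T i1 j')].

Local Open Scope ring_scope.

Definition realized_by (R : realType) (p m : nat) (T : 'I_p -> 'I_m -> nat)
    (a : 'I_p -> R) (b : 'I_m -> R) : Prop :=
  [/\ (forall i : 'I_p, val i = 0%N -> a i = 0),
      (forall i i' : 'I_p, (i <= i')%N -> a i <= a i'),
      (forall j : 'I_m, val j = 0%N -> b j = 0),
      (forall j j' : 'I_m, (j <= j')%N -> b j <= b j') &
      (forall (i i' : 'I_p) (j j' : 'I_m),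
         ((T i j < T i' j')%N <-> a i + b j < a i' + b j') /\
         (T i j = T i' j' <-> a i + b j = a i' + b j'))].

From mathcomp Require Import all_boot all_order all_algebra.
From mathcomp Require Import reals.
From mathcomp Require Import lra zify.
From Stdlib Require Import Classical.
Set Implicit Arguments. Unset Strict Implicit. Unset Printing Implicit Defensive.
Import Order.TTheory GRing.Theory Num.Theory.

(* Write u_j = T(0,j) and v_j = T(1,j).  If some column has u_j = v_j, then
   condition (ii) makes the two rows equal and a = (0,0), b_j = u_j works.
   Otherwise u_j < v_j in every column, and condition (i) forces the two rows
   to order the columns alike: u_j < u_j' iff v_j < v_j'.  The pairs
   (u_j, v_j) thus form a strictly monotone matching s of values with u < v.

   The heart of the proof is that such a matching can be linearized: there is
   a map phi, strictly increasing on the values 0..N, with phi v = phi u + 1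
   whenever s u v.  It is built value by value: phi (n+1) is forced when n+1
   is matched, and otherwise is chosen strictly between phi n and the bounds
   phi u + 1 of the pairs (u, v) with u <= n < v still pending.

   Finally, any phi strictly increasing on the values of T with
   phi (v_j) = phi (u_j) + d realizes T via a = (0, d) and
   b_j = phi (u_j) - phi (u_0). *)

Local Open Scope ring_scope.

Lemma exists_strictly_between (R : realFieldType) (P : nat -> Prop)
    (f : nat -> R) (a : R) (N : nat) :
  (forall u, (u < N)%N -> P u -> a < f u) ->
  exists z, a < z /\ forall u, (u < N)%N -> P u -> z < f u.
Proof.
elim: N => [|N IH] a_lt_f.
  by exists (a + 1); split=> [|u]; [lra | rewrite ltn0].
have [z [a_lt_z z_lt_f]] : exists z, a < z /\ forall u, (u < N)%N -> P u -> z < f u.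
  by apply: IH => u uN; apply: a_lt_f; rewrite ltnS ltnW.
have [PN | notPN] := classic (P N); last first.
  exists z; split=> // u; rewrite ltnS leq_eqVlt => /orP[/eqP -> // | ]; exact: z_lt_f.
have a_lt_fN := a_lt_f N (ltnSn N) PN.
exists (Num.min z ((a + f N) / 2)); split; first by rewrite lt_min a_lt_z; lra.
move=> u; rewrite ltnS leq_eqVlt gt_min => /orP[/eqP -> _ | uN Pu].
  by apply/orP; right; lra.
by rewrite z_lt_f.
Qed.

Definition increasing_upto (R : realFieldType) (N : nat) (phi : nat -> R) : Prop :=
  forall x, (x < N)%N -> phi x < phi x.+1.

Section IncreasingUpto.
Variables (R : realFieldType) (N : nat) (phi : nat -> R).
Hypothesis phi_incr : increasing_upto N phi.

Let below_N : {pred nat} := [pred k | (k <= N)%N].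

Lemma increasing_upto_homo : {in below_N &, {homo phi : x y / (x < y)%N >-> x < y}}.
Proof.
apply: (@Order.NatMonotonyTheory.homo_ltn_lt_in _ _ below_N phi).
  by move=> i j; rewrite !inE => _ jN k /andP[_ /ltnW /leq_trans]; apply.
by move=> i _; rewrite inE; apply: phi_incr.
Qed.

Lemma increasing_upto_lt : {in below_N &, {mono phi : x y / (x < y)%N >-> x < y}}.
Proof. exact/leW_mono_in/le_mono_in/increasing_upto_homo. Qed.

Lemma increasing_upto_le : {in below_N &, {mono phi : x y / (x <= y)%N >-> x <= y}}.
Proof. exact/le_mono_in/increasing_upto_homo. Qed.

Lemma increasing_upto_inj : {in below_N &, injective phi}.
Proof. exact/inc_inj_in/increasing_upto_le. Qed.

End IncreasingUpto.

Section Linearize.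
Variables (R : realFieldType) (s : nat -> nat -> Prop).

Hypothesis s_lt : forall u v, s u v -> (u < v)%N.
Hypothesis s_mono : forall u v u' v', s u v -> s u' v' -> (u < u')%N = (v < v')%N.

Lemma s_inj u u' v : s u v -> s u' v -> u = u'.
Proof.
move=> suv su'v; apply/eqP.
by rewrite eqn_leq leqNgt (s_mono su'v suv) ltnn leqNgt (s_mono suv su'v) ltnn.
Qed.

Definition linearizes (n : nat) (phi : nat -> R) : Prop :=
  [/\ increasing_upto n phi,
      (forall u v, (v <= n)%N -> s u v -> phi v = phi u + 1) &
      (forall u v, (u <= n < v)%N -> s u v -> phi n < phi u + 1)].

Definition extend (phi : nat -> R) (n : nat) (z : R) : nat -> R :=
  fun k => if k == n.+1 then z else phi k.

Lemma extend_below phi n z k : (k <= n)%N -> extend phi n z k = phi k.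
Proof. by rewrite /extend; case: eqP => // ->; rewrite ltnn. Qed.

Lemma linearizes_extend n phi z :
  linearizes n phi -> phi n < z ->
  (forall u, s u n.+1 -> z = phi u + 1) ->
  (forall u v, (u <= n)%N -> (n.+1 < v)%N -> s u v -> z < phi u + 1) ->
  linearizes n.+1 (extend phi n z).
Proof.
move=> [phi_incr phi_eq _] phin_lt_z z_matched z_pending.
have ext_n1 : extend phi n z n.+1 = z by rewrite /extend eqxx.
split.
- move=> x; rewrite ltnS leq_eqVlt => /orP[/eqP -> | xn].
    by rewrite ext_n1 extend_below.
  by rewrite !extend_below ?phi_incr // ltnW.
- move=> u v; rewrite leq_eqVlt => /orP[/eqP -> | vn] suv; have uv := s_lt suv.
    by rewrite ext_n1 extend_below ?(z_matched u suv) // -ltnS.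
  rewrite ltnS in vn; have un : (u <= n)%N := ltnW (leq_trans uv vn).
  by rewrite !extend_below // (phi_eq u v).
- move=> u v /andP[]; rewrite ext_n1 leq_eqVlt => /orP[/eqP -> _ _ | un nv suv].
    by rewrite ext_n1; lra.
  by rewrite extend_below // (z_pending u v).
Qed.

Lemma linearize (N : nat) : exists phi, linearizes N phi.
Proof.
elim: N => [|n [phi lin]].
  exists (fun=> 0); split=> [x | u v | u v].
  - by rewrite ltn0.
  - by rewrite leqn0 => /eqP -> /s_lt.
  - by move=> _ _; lra.
have [phi_incr _ phi_pending] := lin.
have [[u0 su0] | unmatched] := classic (exists u, s u n.+1).
  have u0n : (u0 <= n)%N by rewrite -ltnS s_lt.
  exists (extend phi n (phi u0 + 1)); apply: linearizes_extend => //.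
  - by apply: (phi_pending u0 n.+1); rewrite // u0n ltnSn.
  - by move=> u su; rewrite (s_inj su su0).
  - move=> u v un nv suv; rewrite ltrD2r.
    by rewrite (increasing_upto_lt phi_incr) ?inE // (s_mono su0 suv).
pose pending u := exists v, (n.+1 < v)%N /\ s u v.
have [z [phin_lt_z z_lt]] := @exists_strictly_between R pending
  (fun u => phi u + 1) (phi n) n.+1
  (fun u un '(ex_intro v (conj nv suv)) =>
     phi_pending u v (introT andP (conj un (ltnW nv))) suv).
exists (extend phi n z); apply: linearizes_extend => //.
- by move=> u su; case: unmatched; exists u.
- by move=> u v un nv suv; apply: z_lt => //; exists v.
Qed.

End Linearize.

Section TableauColumns.
Variables (p m : nat) (T : 'I_p -> 'I_m -> nat).
Hypothesis row_mono : forall (i : 'I_p) (j j' : 'I_m), (j <= j')%N -> (T i j <= T i j')%N.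
Hypothesis col_cond : forall (i : 'I_p) (j j1 : 'I_m), val j1 = (val j).+1 ->
  T i j = T i j1 -> forall i' : 'I_p, T i' j = T i' j1.

(* Two equal entries in one row force the two columns to be equal, by
   propagating condition (i) through the columns in between. *)
Lemma equal_in_row_equal_columns (i i' : 'I_p) (j j' : 'I_m) :
  T i j = T i j' -> T i' j = T i' j'.
Proof.
wlog jj' : j j' / (j <= j')%N.
  by move=> wlog_le; case: (leqP j j') => [|/ltnW] /wlog_le // eq_ji /esym/eq_ji.
have [d def_j'] : exists d, val j' = (j + d)%N by exists (j' - j)%N; rewrite subnKC.
elim: d j def_j' {jj'} => [|d IH] j def_j' eq_row.
  by congr (T _ _); apply/val_inj; rewrite def_j' addn0.
have j1_lt_m : (j.+1 < m)%N by have := ltn_ord j'; rewrite def_j'; lia.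
pose j1 := Ordinal j1_lt_m.
have eq_j_j1 : T i j = T i j1.
  apply/eqP; rewrite eqn_leq row_mono /= ?leqnSn // eq_row row_mono //= def_j'.
  by rewrite addnS ltnS leq_addr.
rewrite (@col_cond i j j1 erefl eq_j_j1 i'); apply: IH; first by rewrite def_j' addnS -addSn.
by rewrite -eq_j_j1.
Qed.

Lemma rows_order_columns_alike (i i' : 'I_p) (j j' : 'I_m) :
  (T i j < T i j')%N = (T i' j < T i' j')%N.
Proof.
suff lt_rows k k' : (T k j < T k j')%N -> (T k' j < T k' j')%N.
  by apply/idP/idP; apply: lt_rows.
move=> lt_k; have jj' : (j <= j')%N.
  by rewrite leqNgt; apply: contraL lt_k => /ltnW /(row_mono k); rewrite leqNgt.
rewrite ltn_neqAle row_mono // andbT; apply/eqP => eq_k'.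
by move: lt_k; rewrite (equal_in_row_equal_columns k eq_k') ltnn.
Qed.

End TableauColumns.

Lemma two_row_linearization (R : realFieldType) (m N : nat)
    (T : 'I_2 -> 'I_m -> nat) :
  (forall (i : 'I_2) (j j' : 'I_m), (j <= j')%N -> (T i j <= T i j')%N) ->
  (forall j : 'I_m, (T ord0 j <= T ord_max j)%N) ->
  (forall (i : 'I_2) (j j1 : 'I_m), val j1 = (val j).+1 -> T i j = T i j1 ->
     forall i' : 'I_2, T i' j = T i' j1) ->
  (forall (j : 'I_m), T ord0 j = T ord_max j -> forall j' : 'I_m, T ord0 j' = T ord_max j') ->
  (forall (i : 'I_2) (j : 'I_m), (T i j <= N)%N) ->
  exists (phi : nat -> R) (d : R), increasing_upto N phi /\
    forall j : 'I_m, phi (T ord_max j) = phi (T ord0 j) + d.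
Proof.
move=> row_mono col_le col_cond row_cond T_le_N.
have [[j0 eq_j0] | col_neq] := classic (exists j, T ord0 j = T ord_max j).
  exists (fun k => k%:R), 0; split=> [x _ | j]; first by rewrite ltr_nat.
  by rewrite addr0 (row_cond j0 eq_j0 j).
pose s u v := exists j, T ord0 j = u /\ T ord_max j = v.
have s_lt u v : s u v -> (u < v)%N.
  move=> [j [<- <-]]; rewrite ltn_neqAle col_le andbT.
  by apply/eqP => eq_j; apply: col_neq; exists j.
have s_mono u v u' v' : s u v -> s u' v' -> (u < u')%N = (v < v')%N.
  by move=> [j [<- <-]] [j' [<- <-]]; apply: rows_order_columns_alike.
have [phi [phi_incr phi_eq _]] := linearize R s_lt s_mono N.
exists phi, 1; split=> // j.
by apply: phi_eq => //; exists j.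
Qed.

(* Any phi as above yields a realization: a = (0, d) and
   b_j = phi (T 0 j) - phi (T 0 0), so that a_i + b_j = phi (T i j) - phi (T 0 0). *)
Lemma realization_of_linearization (R : realType) (m N : nat) (hm : (1 <= m)%N)
    (T : 'I_2 -> 'I_m -> nat) (phi : nat -> R) (d : R) :
  (forall (i : 'I_2) (j j' : 'I_m), (j <= j')%N -> (T i j <= T i j')%N) ->
  (forall (i i' : 'I_2) (j : 'I_m), (i <= i')%N -> (T i j <= T i' j)%N) ->
  (forall (i : 'I_2) (j : 'I_m), (T i j <= N)%N) ->
  increasing_upto N phi ->
  (forall j : 'I_m, phi (T ord_max j) = phi (T ord0 j) + d) ->
  exists (a : 'I_2 -> R) (b : 'I_m -> R), realized_by T a b.
Proof.
move=> row_mono col_mono T_le_N phi_incr phi_d.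
pose j0 : 'I_m := Ordinal hm.
pose c := phi (T ord0 j0).
exists (fun i => phi (T i j0) - c), (fun j => phi (T ord0 j) - c).
have sum_ab i j : phi (T i j0) - c + (phi (T ord0 j) - c) = phi (T i j) - c.
  have [-> | ->] : i = ord0 \/ i = ord_max.
    by case: i => [[|[|k]] lt_i]; [left | right | by []]; apply/val_inj.
    by rewrite /c; lra.
  by rewrite !phi_d /c; lra.
have le_phi k k' : (k <= k')%N -> (k' <= N)%N -> phi k <= phi k'.
  move=> kk' k'N; rewrite (increasing_upto_le phi_incr) ?inE //.
  exact: leq_trans kk' k'N.
split=> [i i0 | i i' ii' | j j_0 | j j' jj' | i i' j j'].
- have -> : i = ord0 by apply/val_inj.
  by rewrite subrr.
- by rewrite lerD2r le_phi ?col_mono.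
- have -> : j = j0 by apply/val_inj.
  by rewrite subrr.
- by rewrite lerD2r le_phi ?row_mono.
- rewrite !sum_ab ltrD2r (increasing_upto_lt phi_incr) ?inE //; split=> //.
  split=> [-> // | /addIr].
  by apply: (increasing_upto_inj phi_incr); rewrite inE.
Qed.

Theorem proposition2p6 (R : realType) (m : nat) (hm : (1 <= m)%N)
    (T : 'I_2 -> 'I_m -> nat) :
  constrained_young_tableau T ->
  exists (a : 'I_2 -> R) (b : 'I_m -> R), realized_by T a b.
Proof.
move=> [_ row_mono col_mono col_cond row_cond].
pose N := (\max_(ij : 'I_2 * 'I_m) T ij.1 ij.2)%N.
have T_le_N i j : (T i j <= N)%N.
  exact: (@leq_bigmax _ (fun ij : 'I_2 * 'I_m => T ij.1 ij.2) (i, j)).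
have [phi [d [phi_incr phi_d]]] := @two_row_linearization R m N T row_mono
  (fun j => col_mono ord0 ord_max j isT) col_cond
  (fun j eq_j => row_cond ord0 ord_max j erefl eq_j) T_le_N.
exact: (@realization_of_linearization R m N hm T phi d row_mono col_mono T_le_N phi_incr phi_d).
Qed.
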